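(* Let $P,K:\mathbb{N}_0\to\mathbb{N}_0$ be a scaling such that $\lim_{n\to\infty}n^3\tau(\theta_n)=0$. Then $\lim_{n\to\infty}\mathbb{P}[T_n(\theta_n)>0]=0$.
   Context: Random key graph: for positive integers $K\le P$, $\theta=(K,P)$ and $n\ge3$, let $K_1(\theta),\dots,K_n(\theta)$ be i.i.d. random subsets of $\{1,\dots,P\}$, each uniform over the $K$-element subsets; the random key graph $\mathbb{K}(n;\theta)$ on $\{1,\dots,n\}$ has an edge between distinct $i,j$ iff $K_i(\theta)\cap K_j(\theta)\ne\emptyset$. $T_n(\theta)$ denotes the number of triangles in $\mathbb{K}(n;\theta)$. $\tau(\theta)=K^3/P^2+(K^2/P)^3$. A scaling is a pair of functions $P,K:\mathbb{N}_0\to\mathbb{N}_0$ with $1\le K_n\le P_n$ for all $n$, and $\theta_n=(K_n,P_n)$. *)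

From mathcomp Require Import all_boot.
From Stdlib Require Import Reals.
Set Implicit Arguments. Unset Strict Implicit. Unset Printing Implicit Defensive.

Definition key_assign (n P : nat) := {ffun 'I_n -> {set 'I_P}}.

(* f is in the support of the i.i.d. uniform distribution over K-subsets. *)
Definition valid_assign (n K P : nat) (f : key_assign n P) : bool :=
  [forall i, #|f i| == K].

Definition rkg_edge (n P : nat) (f : key_assign n P) (i j : 'I_n) : bool :=
  (i != j) && (f i :&: f j != set0).

Definition num_triangles (n P : nat) (f : key_assign n P) : nat :=
  #|[set A : {set 'I_n} | (#|A| == 3) &&
       [forall i in A, forall j in A, (i != j) ==> rkg_edge f i j]]|.

(* Number of (equally likely) valid assignments, = C(P,K)^n. *)
Definition num_valid (n K P : nat) : nat :=
  #|[set f : key_assign n P | valid_assign K f]|.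

Definition num_valid_tri (n K P : nat) : nat :=
  #|[set f : key_assign n P | valid_assign K f && (0 < num_triangles f)]|.

(* P[T_n(theta) > 0] for theta = (K,P) with K-subsets drawn uniformly and i.i.d. *)
Definition prob_triangle (n K P : nat) : R :=
  (INR (num_valid_tri n K P) / INR (num_valid n K P))%R.

Definition tau (K P : nat) : R :=
  (INR K ^ 3 / INR P ^ 2 + (INR K ^ 2 / INR P) ^ 3)%R.

From Stdlib Require Import Reals Lra.
From mathcomp Require all_boot zify.

(* First-moment bound.  Three rings pairwise meet iff there are keys
   a in K_i, K_j, b in K_j, K_k and c in K_k, K_i; these can be chosen either all
   equal (one key in all three rings: probability at most P (K/P)^3) or pairwise
   distinct (probability at most P^3 (K/P)^6), because a uniform K-subset contains
   a fixed b-set with probability C(P-b, K-b)/C(P, K) <= (K/P)^b and the rings are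
   independent.  Summing over the at most n^3 triples of nodes gives
   P[T_n > 0] <= n^3 tau.  Probabilities are ratios of counts of key assignments;
   the counting bounds are multiplied out by powers of P to stay in nat. *)

Module TriangleCounting.
Import all_boot zify.
Set Implicit Arguments. Unset Strict Implicit. Unset Printing Implicit Defensive.

Lemma card_ffun_set_in (aT rT : finType) (H : aT -> {set rT}) :
  #|[set f : {ffun aT -> rT} | [forall t, f t \in H t]]| = \prod_t #|H t|.
Proof.
have -> : #|[set f : {ffun aT -> rT} | [forall t, f t \in H t]]|
         = #|family (fun t => mem (H t))|.
  by apply: eq_card => f; rewrite inE; apply/forallP/familyP.
by rewrite card_family foldrE big_map big_enum.
Qed.

Lemma card_bigcup_le_mul (T I : finType) (A : {pred I}) (E : I -> {set T}) m c :
  (forall u, u \in A -> #|E u| * m <= c) -> #|\bigcup_(u in A) E u| * m <= #|A| * c.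
Proof.
move=> leE; rewrite -[#|A| * c]sum_nat_const.
apply: (@big_rec2 _ _ (fun (U : {set T}) s => #|U| * m <= s)) => [|u U s Au leU].
  by rewrite cards0.
apply: leq_trans (leq_mul (leq_card_setU _ _) (leqnn m)) _.
by rewrite mulnDl leq_add ?leE.
Qed.

Lemma bin_sub_mul_expn_le N K b : K <= N -> b <= K ->
  'C(N - b, K - b) * N ^ b <= K ^ b * 'C(N, K).
Proof.
move=> leKN; elim: b => [|b IH] ltbK; first by rewrite !subn0 mulnC.
have diag : (N - b) * 'C(N - b.+1, K - b.+1) = (K - b) * 'C(N - b, K - b).
  by have := mul_bin_diag (N - b) (K - b.+1); rewrite -subnS subnSK.
have step : 'C(N - b.+1, K - b.+1) * N <= K * 'C(N - b, K - b).
  rewrite -(@leq_pmul2l (N - b)) ?subn_gt0 ?(leq_trans ltbK) //.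
  have le_KN : (K - b) * N <= (N - b) * K by nia.
  by rewrite mulnA diag mulnAC mulnA leq_mul.
apply: (@leq_trans (K * 'C(N - b, K - b) * N ^ b)).
  by rewrite expnS mulnA leq_mul2r step orbT.
by rewrite expnS -!mulnA leq_mul2l IH ?orbT // ltnW.
Qed.

Lemma card_supsets_draws (T : finType) (B : {set T}) K : #|B| <= K <= #|T| ->
  #|[set S : {set T} | #|S| == K & B \subset S]| = 'C(#|T| - #|B|, K - #|B|).
Proof.
case/andP=> leBK leKT.
have -> : [set S : {set T} | #|S| == K & B \subset S]
    = @setC T @^-1: [set A : {set T} | A \subset ~: B & #|A| == #|T| - K].
  apply/setP => S; rewrite !inE setCS andbC; congr (_ && _).
  by move: (cardsC S) => cS; apply/eqP/eqP; lia.
rewrite (card_preimset _ (@setC_inj T)).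
have cB : #|~: B| = #|T| - #|B| by rewrite -(cardsC B) addKn.
have -> : #|T| - K = (#|T| - #|B|) - (K - #|B|) by lia.
by rewrite cards_draws cB bin_sub // leq_sub2r.
Qed.

Lemma card_supsets_le (T : finType) (B : {set T}) K : K <= #|T| ->
  #|[set S : {set T} | #|S| == K & B \subset S]| * #|T| ^ #|B| <= K ^ #|B| * 'C(#|T|, K).
Proof.
move=> leKT; have [leBK | ltKB] := leqP #|B| K.
  by rewrite card_supsets_draws ?leBK // bin_sub_mul_expn_le.
rewrite (_ : #|_| = 0) //; apply: eq_card0 => S; rewrite !inE.
apply/negbTE/andP => -[/eqP cardS /subset_leq_card].
by rewrite cardS leqNgt ltKB.
Qed.

Definition holding n K P (R : 'I_n -> {set 'I_P}) : {set key_assign n P} :=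
  [set f | valid_assign K f && [forall t, R t \subset f t]].

Lemma card_holding n K P (R : 'I_n -> {set 'I_P}) :
  #|holding K R| = \prod_t #|[set S : {set 'I_P} | #|S| == K & R t \subset S]|.
Proof.
rewrite -card_ffun_set_in; apply: eq_card => f; rewrite !inE.
apply/andP/forallP => [[/forallP cardf /forallP subf] t | holdf].
  by rewrite inE cardf subf.
by split; apply/forallP => t; have := holdf t; rewrite inE => /andP[].
Qed.

Lemma num_validE n K P : num_valid n K P = 'C(P, K) ^ n.
Proof.
have -> : num_valid n K P = #|holding K (fun _ : 'I_n => set0 : {set 'I_P})|.
  apply: eq_card => f; rewrite !inE -[LHS]andbT; congr (_ && _).
  by apply/esym/forallP => t; exact: sub0set.
rewrite card_holding (eq_bigr (fun=> 'C(P, K))) ?prod_nat_const ?card_ord // => t _.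
rewrite -[P in 'C(P, _)]card_ord -card_draws.
by apply: eq_card => S; rewrite !inE sub0set andbT.
Qed.

Lemma card_holding_le n K P (R : 'I_n -> {set 'I_P}) : K <= P ->
  #|holding K R| * P ^ (\sum_t #|R t|) <= K ^ (\sum_t #|R t|) * 'C(P, K) ^ n.
Proof.
move=> leKP; rewrite card_holding !expn_sum -[n in _ ^ n]card_ord -prod_nat_const.
rewrite -!big_split /=; apply: leq_prod => t _.
by have := @card_supsets_le _ (R t) K; rewrite card_ord; apply.
Qed.

Definition pairwise_meet n P (f : key_assign n P) (i j k : 'I_n) : bool :=
  [&& f i :&: f j != set0, f j :&: f k != set0 & f k :&: f i != set0].

(* The keys node [t] must hold for [a], [b], [c] to witness the edges ij, jk, ki. *)
Definition triangle_keys n P (i j k : 'I_n) (a b c : 'I_P) (t : 'I_n) : {set 'I_P} :=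
  [set x | [|| (x == a) && (t \in [set i; j]), (x == b) && (t \in [set j; k])
             | (x == c) && (t \in [set k; i])]].

Lemma triangle_keys_sub n P (f : key_assign n P) i j k a b c :
  [&& a \in f i :&: f j, b \in f j :&: f k & c \in f k :&: f i] ->
  [forall t, triangle_keys i j k a b c t \subset f t].
Proof.
rewrite !inE => /and3P[/andP[ai aj] /andP[bj bk] /andP[ck ci]].
apply/forallP => t; apply/subsetP => x; rewrite !inE.
by case/or3P => /andP[/eqP-> /orP[]] /eqP->.
Qed.

Lemma sum_card_triangle_keys n P (i j k : 'I_n) (a b c : 'I_P) : uniq [:: i; j; k] ->
  \sum_t #|triangle_keys i j k a b c t| = #|[set a; c]| + #|[set a; b]| + #|[set b; c]|.
Proof.
rewrite /= !inE !negb_or andbT => /andP[/andP[ij ik] jk].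
rewrite (bigD1 i) // (bigD1 j) 1?eq_sym // (bigD1 k) /=; last first.
  by rewrite eq_sym ik eq_sym jk.
rewrite big1 ?addn0; last first.
  move=> t /andP[/andP[ti tj] tk]; apply: eq_card0 => x.
  by rewrite !inE (negbTE ti) (negbTE tj) (negbTE tk) !andbF.
have [ji ki kj] : [/\ j != i, k != i & k != j] by split; rewrite eq_sym.
rewrite addnA; congr (_ + _ + _); apply: eq_card => x; rewrite !inE eqxx.
all: rewrite ?(negbTE ij) ?(negbTE ik) ?(negbTE jk) ?(negbTE ji) ?(negbTE ki) ?(negbTE kj).
all: by rewrite !andbT !andbF ?orbF.
Qed.

Definition distinct_triples (T : finType) : {set T * T * T} :=
  [set u | uniq [:: u.1.1; u.1.2; u.2]].

Lemma card_distinct_triples_le (T : finType) : #|distinct_triples T| <= #|T| ^ 3.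
Proof.
by rewrite (leq_trans (max_card _)) // !card_prod !expnS expn0 muln1 mulnA.
Qed.

Lemma pairwise_meet_witness n P (f : key_assign n P) i j k : pairwise_meet f i j k ->
  (exists x, [&& x \in f i :&: f j, x \in f j :&: f k & x \in f k :&: f i]) \/
  (exists a b c, uniq [:: a; b; c] &&
     [&& a \in f i :&: f j, b \in f j :&: f k & c \in f k :&: f i]).
Proof.
case/and3P=> /set0Pn[a aij] /set0Pn[b bjk] /set0Pn[c cki].
move: (aij) (bjk) (cki); rewrite !inE => /andP[ai aj] /andP[bj bk] /andP[ck ci].
have [eab|ab] := eqVneq a b; first by left; exists a; rewrite !inE ai aj eab bk.
have [ebc|bc] := eqVneq b c; first by left; exists b; rewrite !inE bj bk ebc ci.
have [eac|ac] := eqVneq a c; first by left; exists a; rewrite !inE ai aj eac ck.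
by right; exists a, b, c; rewrite aij bjk cki /= !inE !negb_or ab ac bc.
Qed.

Lemma card_pairwise_meet_le n K P (i j k : 'I_n) : uniq [:: i; j; k] -> K <= P ->
  #|[set f : key_assign n P | valid_assign K f && pairwise_meet f i j k]| * P ^ 6
    <= (P ^ 4 * K ^ 3 + P ^ 3 * K ^ 6) * 'C(P, K) ^ n.
Proof.
move=> uijk leKP.
pose common := \bigcup_(x in 'I_P) holding K (triangle_keys i j k x x x).
pose separate := \bigcup_(u in distinct_triples 'I_P)
                    holding K (triangle_keys i j k u.1.1 u.1.2 u.2).
have cover : [set f | valid_assign K f && pairwise_meet f i j k] \subset common :|: separate.
  apply/subsetP => f; rewrite inE.
  case/andP=> validf /pairwise_meet_witness[[x wit]|[a [b [c]]]].
    rewrite inE; apply/orP; left; apply/bigcupP; exists x => //.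
    by rewrite inE validf triangle_keys_sub.
  case/andP=> abc wit; rewrite inE; apply/orP; right; apply/bigcupP; exists (a, b, c).
    by rewrite inE.
  by rewrite inE validf triangle_keys_sub.
have common_le : #|common| * P ^ 3 <= P * (K ^ 3 * 'C(P, K) ^ n).
  apply: leq_trans (card_bigcup_le_mul _) _ => [x _|]; last by rewrite card_ord.
  have := card_holding_le (triangle_keys i j k x x x) leKP.
  by rewrite sum_card_triangle_keys // !setUid !cards1.
have separate_le : #|separate| * P ^ 6 <= P ^ 3 * (K ^ 6 * 'C(P, K) ^ n).
  apply: leq_trans (card_bigcup_le_mul (c := K ^ 6 * 'C(P, K) ^ n) _) _ => [[[a b] c]|].
    rewrite inE /= !inE !negb_or andbT => /andP[/andP[ab ac] bc].
    have := card_holding_le (triangle_keys i j k a b c) leKP.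
    by rewrite sum_card_triangle_keys // !cards2 ab ac bc.
  by rewrite leq_mul2r -[X in _ <= X ^ 3](card_ord P) card_distinct_triples_le orbT.
apply: leq_trans (leq_mul (subset_leq_card cover) (leqnn _)) _.
apply: leq_trans (leq_mul (leq_card_setU _ _) (leqnn _)) _.
rewrite !mulnDl leq_add //; last by rewrite -mulnA.
rewrite -[6]/(3 + 3) expnD mulnA.
apply: leq_trans (leq_mul common_le (leqnn _)) _.
by rewrite mulnC mulnA -expnSr mulnA.
Qed.

Lemma triangle_nodes n P (f : key_assign n P) : 0 < num_triangles f ->
  exists i j k, uniq [:: i; j; k] && pairwise_meet f i j k.
Proof.
case/card_gt0P => A; rewrite inE => /andP[/eqP cardA /forallP adjA].
have /card_gt2P[i [j [k [[iA jA kA] [ij jk ki]]]]] : 2 < #|A| by rewrite cardA.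
have meet u v : u \in A -> v \in A -> u != v -> f u :&: f v != set0.
  move=> uA vA uv; have := adjA u; rewrite uA => /forallP/(_ v).
  by rewrite vA uv /= => /andP[].
exists i, j, k; rewrite /pairwise_meet !meet // /= !inE !negb_or ij jk andbT /=.
by rewrite eq_sym ki.
Qed.

Lemma num_valid_tri_le n K P : K <= P ->
  num_valid_tri n K P * P ^ 6 <= n ^ 3 * ((P ^ 4 * K ^ 3 + P ^ 3 * K ^ 6) * 'C(P, K) ^ n).
Proof.
move=> leKP.
have cover : [set f : key_assign n P | valid_assign K f && (0 < num_triangles f)] \subset
    \bigcup_(u in distinct_triples 'I_n)
       [set f | valid_assign K f && pairwise_meet f u.1.1 u.1.2 u.2].
  apply/subsetP => f; rewrite inE.
  case/andP=> validf /triangle_nodes[i [j [k /andP[uijk meetf]]]].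
  by apply/bigcupP; exists (i, j, k); rewrite inE ?validf.
apply: leq_trans (leq_mul (subset_leq_card cover) (leqnn _)) _.
apply: leq_trans (card_bigcup_le_mul _) _ => [[[i j] k]|].
  by rewrite inE /= => uijk; apply: card_pairwise_meet_le.
by rewrite leq_mul2r -[X in _ <= X ^ 3](card_ord n) card_distinct_triples_le orbT.
Qed.

Local Open Scope R_scope.

Lemma INR_expn a k : INR (a ^ k)%N = INR a ^ k.
Proof. by elim: k => [|k IH] //; rewrite expnS mult_INR IH. Qed.

Lemma prob_triangle_bounds n K P : (1 <= K)%coq_nat -> (K <= P)%coq_nat ->
  0 <= prob_triangle n K P <= INR n ^ 3 * tau K P.
Proof.
move=> /leP K_gt0 /leP leKP.
have v_gt0 : 0 < INR (num_valid n K P).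
  by apply/lt_0_INR/ltP; rewrite num_validE expn_gt0 bin_gt0 leKP.
have p_gt0 : 0 < INR P by apply/lt_0_INR/ltP/(leq_trans K_gt0 leKP).
have := num_valid_tri_le n leKP; rewrite -num_validE => /leP/le_INR.
rewrite !(mult_INR, plus_INR, INR_expn) /prob_triangle /tau.
have := pos_INR (num_valid_tri n K P).
move: v_gt0 p_gt0.
set a := INR (num_valid_tri n K P); set v := INR (num_valid n K P); set p := INR P.
move=> v_gt0 p_gt0 a_ge0 bound.
split; first exact: Rmult_le_pos a_ge0 (Rlt_le _ _ (Rinv_0_lt_compat _ v_gt0)).
apply: (Rmult_le_reg_r (v * p ^ 6)); first exact: Rmult_lt_0_compat v_gt0 (pow_lt _ _ p_gt0).
have -> : a / v * (v * p ^ 6) = a * p ^ 6 by field; lra.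
have -> : INR n ^ 3 * (INR K ^ 3 / p ^ 2 + (INR K ^ 2 / p) ^ 3) * (v * p ^ 6)
          = INR n ^ 3 * ((p ^ 4 * INR K ^ 3 + p ^ 3 * INR K ^ 6) * v) by field; lra.
exact: bound.
Qed.

End TriangleCounting.

Open Scope R_scope.

Theorem theorem1 (Ks Ps : nat -> nat)
  (hscal : forall n, (1 <= Ks n)%nat /\ (Ks n <= Ps n)%nat)
  (htau : Un_cv (fun n => INR n ^ 3 * tau (Ks n) (Ps n)) 0) :
  Un_cv (fun n => prob_triangle n (Ks n) (Ps n)) 0.
Proof.
intros eps eps_gt0.
destruct (htau eps eps_gt0) as [N HN].
exists N; intros n le_Nn.
specialize (HN n le_Nn).
destruct (hscal n) as [K_gt0 le_KP].
destruct (TriangleCounting.prob_triangle_bounds n K_gt0 le_KP) as [lo hi].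
unfold R_dist in *; rewrite Rminus_0_r in *.
rewrite Rabs_right by lra.
pose proof (Rle_abs (INR n ^ 3 * tau (Ks n) (Ps n))); lra.
Qed.
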